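(* Let $T$ be an anonymous, non-counterfactual, reasonable tail test. If $T\not\sim\mathcal{D}$, then for every $0<\epsilon<1$ there exists a pair $\hat f=(\hat f_0,\hat f_1)\in F\times F$ such that $$P_0^{\hat f}(\{T(\cdot,\hat f)=1\})>1-\epsilon\quad\text{or}\quad P_1^{\hat f}(\{T(\cdot,\hat f)=0\})>1-\epsilon.$$
   Context: Let $\Omega=\{0,1\}$ and let $\Omega^\infty$ be the set of infinite sequences $\omega=(\omega_1,\omega_2,\dots)$; $\omega^t=(\omega_1,\dots,\omega_t)$ denotes the prefix and also the cylinder set $\{\hat\omega:\hat\omega^t=\omega^t\}$; $\Omega^\infty$ carries the $\sigma$-algebra generated by cylinders. $\Delta(\Omega)$ is the set of probability distributions on $\Omega$. A forecasting strategy is a function $f:\bigcup_{t\ge 0}(\Omega\times\Delta(\Omega)\times\Delta(\Omega))^t\to\Delta(\Omega)$; $F$ is the set of all forecasting strategies. For $f=(f_0,f_1)$ and $\omega$, the play path $h=h(\omega,f_0,f_1)\in(\Omega\times\Delta(\Omega)\times\Delta(\Omega))^\infty$ is defined by $h^0=\emptyset$, $h^t=(h^{t-1},(\omega_t,f_0(h^{t-1}),f_1(h^{t-1})))$; $h^n$ is its prefix of length $n$ and $h_n$ its suffix of coordinates indexed by $t\ge n$. The induced measures satisfy $P_i^f(\omega^t)=\prod_{n=1}^t f_i(h^{n-1})[\omega_n]$. A comparison test is a function $T:\Omega^\infty\times F\times F\to\{0,\tfrac12,1\}$, measurable in $\omega$ for each fixed pair; $\{T(\cdot,f)=k\}=\{\omega:T(\omega,f_0,f_1)=k\}$.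 $T$ is anonymous if $T(\omega,f_0,f_1)=1-T(\omega,f_1,f_0)$ always. $T$ is non-counterfactual if there is $\hat T$ on $(\Omega\times\Delta(\Omega)\times\Delta(\Omega))^\infty$ with $T(\omega,f_0,f_1)=\hat T(h(\omega,f_0,f_1))$. $T$ is reasonable if for all $f$, $i\in\{0,1\}$ and measurable $A$: $P_i^f(A)>0$ and $P_{1-i}^f(A)=0$ imply $P_i^f(A\cap\{T(\cdot,f)=i\})>0$. Two triplets $(\omega,f_0,f_1),(\tilde\omega,\tilde f_0,\tilde f_1)$ eventually coincide if there exists $n>1$ such that $h_n(\omega,f_0,f_1)=h_n(\tilde\omega,\tilde f_0,\tilde f_1)$ and for all $1\le t\le n-1$, $i\in\{0,1\}$: $f_i(h^{t-1}(\omega,f_0,f_1))[\omega_t]>0$ and $\tilde f_i(h^{t-1}(\tilde\omega,\tilde f_0,\tilde f_1))[\tilde\omega_t]>0$. $T$ is a tail test if it takes equal values on any two triplets that eventually coincide. $T\sim\hat T$ means: for every pair $f$ and $i\in\{0,1\}$, $P_i^f(\{\omega:T(\omega,f_0,f_1)\ne\hat T(\omega,f_0,f_1)\})=0$. Likelihood ratios along $h=h(\omega,f_0,f_1)$: $D^t_{f_0}f_1(\omega)=\prod_{n=1}^t \frac{f_1(h^{n-1})[\omega_n]}{f_0(h^{n-1})[\omega_n]}$, $D^t_{f_1}f_0(\omega)=\prod_{n=1}^t \frac{f_0(h^{n-1})[\omega_n]}{f_1(h^{n-1})[\omega_n]}$. For $(j,k)\in\{(0,1),(1,0)\}$, $\overline{D}_{f_j}f_k=\limsup_t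 D^t_{f_j}f_k$, $\underline{D}_{f_j}f_k=\liminf_t D^t_{f_j}f_k$ if $f_j(h^{n-1})[\omega_n]>0$ for all $n$, and both $=+\infty$ otherwise; if they coincide and are finite the common value is the derivative $D_{f_j}f_k(\omega)$. The derivative test: $\mathcal{D}(\omega,f_0,f_1)=1$ if $D_{f_1}f_0(\omega)$ exists and equals $0$; $=0$ if $D_{f_0}f_1(\omega)$ exists and equals $0$; $=\tfrac12$ otherwise. *)

From Stdlib Require Import Reals List ClassicalEpsilon.
Open Scope R_scope.

(* Delta(Omega), Omega = {0,1} = bool: a distribution is the probability of outcome 1 *)
Definition Dist : Type := {p : R | 0 <= p <= 1}.
Definition dprob (d : Dist) (b : bool) : R :=
  if b then proj1_sig d else 1 - proj1_sig d.

Definition Entry : Type := (bool * Dist * Dist)%type.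
(* forecasting strategy: finite histories (oldest first) -> distribution *)
Definition Strategy : Type := list Entry -> Dist.
(* infinite sequence; w k is omega_{k+1} *)
Definition Seq : Type := nat -> bool.

Fixpoint hist (f0 f1 : Strategy) (w : Seq) (t : nat) : list Entry :=
  match t with
  | O => nil
  | S t' => hist f0 f1 w t' ++
            ((w t', f0 (hist f0 f1 w t'), f1 (hist f0 f1 w t')) :: nil)
  end.

(* coordinate k of the play path h (the coordinate indexed by t = k+1) *)
Definition path (f0 f1 : Strategy) (w : Seq) (k : nat) : Entry :=
  (w k, f0 (hist f0 f1 w k), f1 (hist f0 f1 w k)).

(* forecaster i (false = 0, true = 1) *)
Definition strat (i : bool) (f0 f1 : Strategy) : Strategy := if i then f1 else f0.

Definition fprob (f0 f1 : Strategy) (i : bool) (w : Seq) (k : nat) : R :=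
  dprob (strat i f0 f1 (hist f0 f1 w k)) (w k).

Definition cyl (v : Seq) (t : nat) : Seq -> Prop :=
  fun w => forall k, (k < t)%nat -> w k = v k.

Fixpoint cylmass (f0 f1 : Strategy) (i : bool) (v : Seq) (t : nat) : R :=
  match t with
  | O => 1
  | S t' => cylmass f0 f1 i v t' * fprob f0 f1 i v t'
  end.

Inductive measurable : (Seq -> Prop) -> Prop :=
  | meas_cyl : forall v t, measurable (cyl v t)
  | meas_compl : forall A, measurable A -> measurable (fun w => ~ A w)
  | meas_union : forall (A : nat -> Seq -> Prop),
      (forall n, measurable (A n)) -> measurable (fun w => exists n, A n w)
  | meas_ext : forall A B, measurable A -> (forall w, A w <-> B w) -> measurable B.

(* countable covers by cylinders (None = empty piece) *)
Definition Cover : Type := nat -> option (Seq * nat).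
Definition cover_piece (c : Cover) (n : nat) (w : Seq) : Prop :=
  match c n with None => False | Some (v, t) => cyl v t w end.
Definition cover_mass (f0 f1 : Strategy) (i : bool) (c : Cover) (n : nat) : R :=
  match c n with None => 0 | Some (v, t) => cylmass f0 f1 i v t end.

Definition cover_value (f0 f1 : Strategy) (i : bool) (A : Seq -> Prop) (r : R) : Prop :=
  exists c : Cover,
    (forall w, A w -> exists n, cover_piece c n w) /\
    infinite_sum (cover_mass f0 f1 i c) r.

Definition is_inf (S : R -> Prop) (r : R) : Prop :=
  (forall x, S x -> r <= x) /\ (forall y, (forall x, S x -> y <= x) -> y <= r).

(* P_i^f(A): outer measure generated by the cylinder masses; on measurable
   sets this is the unique (Caratheodory) extension of the cylinder measure. *)
Definition Pm (f0 f1 : Strategy) (i : bool) (A : Seq -> Prop) : R :=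
  epsilon (inhabits 0) (fun r => is_inf (cover_value f0 f1 i A) r).

Inductive Verdict : Type := V0 | Vhalf | V1.
Definition vflip (v : Verdict) : Verdict :=
  match v with V0 => V1 | Vhalf => Vhalf | V1 => V0 end.
Definition vof (i : bool) : Verdict := if i then V1 else V0.

Definition Test : Type := Seq -> Strategy -> Strategy -> Verdict.

Definition test_measurable (T : Test) : Prop :=
  forall f0 f1 k, measurable (fun w => T w f0 f1 = k).

Definition anonymous (T : Test) : Prop :=
  forall w f0 f1, T w f0 f1 = vflip (T w f1 f0).

Definition non_counterfactual (T : Test) : Prop :=
  exists Th : (nat -> Entry) -> Verdict,
    forall w f0 f1, T w f0 f1 = Th (path f0 f1 w).

Definition reasonable (T : Test) : Prop :=
  forall f0 f1 (i : bool) (A : Seq -> Prop), measurable A ->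
    Pm f0 f1 i A > 0 -> Pm f0 f1 (negb i) A = 0 ->
    Pm f0 f1 i (fun w => A w /\ T w f0 f1 = vof i) > 0.

(* eventually coincide; 0-based: suffix from index n-1, positivity at indices < n-1 *)
Definition ev_coincide (w : Seq) (f0 f1 : Strategy) (w' : Seq) (g0 g1 : Strategy) : Prop :=
  exists n : nat, (n > 1)%nat /\
    (forall k, (n - 1 <= k)%nat -> path f0 f1 w k = path g0 g1 w' k) /\
    (forall t (i : bool), (t < n - 1)%nat ->
        fprob f0 f1 i w t > 0 /\ fprob g0 g1 i w' t > 0).

Definition tail_test (T : Test) : Prop :=
  forall w f0 f1 w' g0 g1, ev_coincide w f0 f1 w' g0 g1 -> T w f0 f1 = T w' g0 g1.

Fixpoint Dt (f0 f1 : Strategy) (j : bool) (w : Seq) (t : nat) : R :=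
  match t with
  | O => 1
  | S t' => Dt f0 f1 j w t' * (fprob f0 f1 (negb j) w t' / fprob f0 f1 j w t')
  end.

Definition Dzero (f0 f1 : Strategy) (j : bool) (w : Seq) : Prop :=
  (forall n, fprob f0 f1 j w n > 0) /\ Un_cv (Dt f0 f1 j w) 0.

Definition Dtest : Test := fun w f0 f1 =>
  if excluded_middle_informative (Dzero f0 f1 true w) then V1
  else if excluded_middle_informative (Dzero f0 f1 false w) then V0
  else Vhalf.

Definition test_equiv (T T' : Test) : Prop :=
  forall f0 f1 (i : bool), Pm f0 f1 i (fun w => T w f0 f1 <> T' w f0 f1) = 0.

From Stdlib Require Import Reals List ClassicalEpsilon Lra Lia Classical Cantor.
Open Scope R_scope.
Import ListNotations.

(* Suppose [T] and the derivative test [D] disagree with positive [P_i]-probability.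
   Where [D] says [i], i.e. [D_(f_i) f_(1-i) = 0], the measure [P_(1-i)] vanishes, so a
   reasonable [T] also says [i] there [P_i]-almost surely; [D] saying [1-i] and
   forecaster [i] giving probability [0] to the outcome are [P_i]-null events.  What
   remains is a set [X] of positive [P_j]-measure on which [T] rejects forecaster [j]
   while the other forecaster never assigns probability [0]: either [T] rejects [i], or
   [T] rejects [1-i] where the likelihood ratio does not vanish, and there [P_i] is
   absolutely continuous with respect to [P_(1-i)].

   By a density argument [X] carries a fraction [1 - eps/2] of the [P_j]-mass of some
   cylinder [v^t].  Let forecaster [j] predict [v] with confidence [q] during the first
   [t] rounds and then continue as before.  The new plays eventually coincide with the
   old ones, so the tail test still rejects [j] on [X] inside [v^t], a set whose new
   [P_j]-probability is at least [(1 - eps/2) q ^ t > 1 - eps] for [q] close to [1]. *)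

(** * Forecast probabilities along a path *)

Lemma dprob_bounds d b : 0 <= dprob d b <= 1.
Proof. destruct d as [p Hp]; destruct b; simpl; lra. Qed.

Lemma dprob_false_plus_true d : dprob d false + dprob d true = 1.
Proof. destruct d as [p Hp]; simpl; lra. Qed.

Lemma hist_length f0 f1 w n : length (hist f0 f1 w n) = n.
Proof. induction n; simpl; auto. rewrite length_app, IHn; simpl; lia. Qed.

Lemma hist_ext f0 f1 w w' n : (forall k, (k < n)%nat -> w k = w' k) ->
  hist f0 f1 w n = hist f0 f1 w' n.
Proof.
  induction n; intros H; simpl; auto.
  rewrite IHn by (intros; apply H; lia). rewrite (H n) by lia. reflexivity.
Qed.

Lemma fprob_ext f0 f1 i w w' n : (forall k, (k <= n)%nat -> w k = w' k) ->
  fprob f0 f1 i w n = fprob f0 f1 i w' n.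
Proof.
  intros H; unfold fprob.
  rewrite (hist_ext f0 f1 w w' n) by (intros; apply H; lia). rewrite (H n) by lia.
  reflexivity.
Qed.

Lemma cylmass_ext f0 f1 i w w' n : (forall k, (k < n)%nat -> w k = w' k) ->
  cylmass f0 f1 i w n = cylmass f0 f1 i w' n.
Proof.
  induction n; intros H; simpl; auto.
  rewrite IHn, (fprob_ext f0 f1 i w w' n) by (intros; apply H; lia); reflexivity.
Qed.

Lemma Dt_ext f0 f1 j w w' n : (forall k, (k < n)%nat -> w k = w' k) ->
  Dt f0 f1 j w n = Dt f0 f1 j w' n.
Proof.
  induction n; intros H; simpl; auto.
  rewrite IHn, (fprob_ext f0 f1 j w w' n), (fprob_ext f0 f1 (negb j) w w' n)
    by (intros; apply H; lia); reflexivity.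
Qed.

Lemma fprob_bounds f0 f1 i w n : 0 <= fprob f0 f1 i w n <= 1.
Proof. apply dprob_bounds. Qed.

Lemma cylmass_bounds f0 f1 i w n : 0 <= cylmass f0 f1 i w n <= 1.
Proof.
  induction n; simpl; [lra|]. pose proof (fprob_bounds f0 f1 i w n).
  split; [apply Rmult_le_pos; lra|].
  rewrite <- (Rmult_1_r 1). apply Rmult_le_compat; lra.
Qed.

Lemma fprob_pos_of_cylmass f0 f1 i w n k : cylmass f0 f1 i w n > 0 -> (k < n)%nat ->
  fprob f0 f1 i w k > 0.
Proof.
  induction n; intros H Hk; [lia|]. simpl in H.
  pose proof (cylmass_bounds f0 f1 i w n). pose proof (fprob_bounds f0 f1 i w n).
  assert (cylmass f0 f1 i w n > 0 /\ fprob f0 f1 i w n > 0) as [Hc Hf] by (split; nra).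
  destruct (Nat.eq_dec k n) as [->|]; auto. apply IHn; [auto|lia].
Qed.

Lemma cylmass_pos f0 f1 i w n : (forall k, (k < n)%nat -> fprob f0 f1 i w k > 0) ->
  cylmass f0 f1 i w n > 0.
Proof.
  induction n; intros H; simpl; [lra|].
  apply Rmult_lt_0_compat; [apply IHn; intros|]; apply H; lia.
Qed.

(** * Series and finite sums *)

Lemma series_nonneg a r : (forall n, 0 <= a n) -> infinite_sum a r -> 0 <= r.
Proof.
  intros Ha Hr. eapply Rle_trans; [|apply (sum_incr a 0 r Hr Ha)]. apply Ha.
Qed.

Lemma series_of_bounded_partial_sums a B : (forall n, 0 <= a n) ->
  (forall N, sum_f_R0 a N <= B) -> exists r, infinite_sum a r /\ r <= B.
Proof.
  intros Ha HB.
  assert (G : Un_growing (sum_f_R0 a)) by (intros n; simpl; pose proof (Ha (S n)); lra).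
  assert (U : has_ub (sum_f_R0 a)) by (exists B; intros x [i ->]; auto).
  destruct (growing_cv _ G U) as [l Hl]. exists l; split; auto.
  apply Rle_cv_lim with (sum_f_R0 a) (fun _ => B); auto.
  intros e He; exists 0%nat; intros; unfold Rdist; rewrite Rminus_diag, Rabs_R0; lra.
Qed.

Lemma infinite_sum_first a : (forall n, a (S n) = 0) -> infinite_sum a (a 0%nat).
Proof.
  intros Ha e He; exists 0%nat; intros n _. unfold Rdist.
  replace (sum_f_R0 a n) with (a 0%nat); [rewrite Rminus_diag, Rabs_R0; lra|].
  induction n; simpl; auto. rewrite <- IHn, Ha; ring.
Qed.

Lemma geometric_partial_sum d N :
  sum_f_R0 (fun n => d * (/2) ^ (S n)) N = d - d * (/2) ^ (S N).
Proof. induction N; simpl; [field|]. simpl in IHN. rewrite IHN. field. Qed.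

Definition lsum {X : Type} (g : X -> R) (l : list X) : R :=
  fold_right (fun x acc => g x + acc) 0 l.

Lemma lsum_app {X} (g : X -> R) l1 l2 : lsum g (l1 ++ l2) = lsum g l1 + lsum g l2.
Proof. induction l1; simpl; [ring|rewrite IHl1; ring]. Qed.

Lemma lsum_nonneg {X} (g : X -> R) l : (forall x, 0 <= g x) -> 0 <= lsum g l.
Proof. intros H; induction l; simpl; [lra|]. pose proof (H a); lra. Qed.

Lemma lsum_le {X} (g h : X -> R) l : (forall x, In x l -> g x <= h x) ->
  lsum g l <= lsum h l.
Proof.
  induction l; simpl; intros H; [lra|].
  pose proof (H a (or_introl eq_refl)). pose proof (IHl (fun x Hx => H x (or_intror Hx))). lra.
Qed.

Lemma lsum_scal {X} (g : X -> R) c l : lsum (fun x => c * g x) l = c * lsum g l.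
Proof. induction l; simpl; [ring|rewrite IHl; ring]. Qed.

Lemma lsum_map {X Y} (g : Y -> R) (f : X -> Y) l :
  lsum g (map f l) = lsum (fun x => g (f x)) l.
Proof. induction l; simpl; congruence. Qed.

Lemma lsum_ext {X} (g h : X -> R) l : (forall x, In x l -> g x = h x) ->
  lsum g l = lsum h l.
Proof. intros H. apply Rle_antisym; apply lsum_le; intros x Hx; rewrite H; auto; lra. Qed.

Lemma lsum_list_prod {X Y} (g : X * Y -> R) L M :
  lsum g (list_prod L M) = lsum (fun x => lsum g (map (pair x) M)) L.
Proof. induction L; simpl; auto. rewrite lsum_app, IHL. reflexivity. Qed.

Lemma lsum_filter {X} (g : X -> R) (p : X -> bool) l :
  lsum g l = lsum g (filter p l) + lsum g (filter (fun x => negb (p x)) l).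
Proof. induction l; simpl; [ring|]. destruct (p a); simpl; rewrite IHl; ring. Qed.

Lemma sum_f_R0_lsum a N : sum_f_R0 a N = lsum a (seq 0 (S N)).
Proof.
  induction N; [simpl; ring|].
  rewrite (seq_S (S N) 0), lsum_app, <- IHN. simpl. ring.
Qed.

Lemma lsum_incl {X} (dec : forall x y : X, {x = y} + {x <> y}) (g : X -> R) l L :
  (forall x, 0 <= g x) -> NoDup l -> incl l L -> lsum g l <= lsum g L.
Proof.
  intros Hg; revert L; induction l as [|a l IH]; intros L Hl HlL; simpl.
  - apply lsum_nonneg; auto.
  - inversion Hl; subst.
    assert (Hrem : lsum g l <= lsum g (remove dec a L)).
    { apply IH; auto. intros x Hx. apply in_in_remove; [intros ->; tauto|apply HlL; simpl; auto]. }
    enough (g a + lsum g (remove dec a L) <= lsum g L) by lra.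
    assert (Ha : In a L) by (apply HlL; simpl; auto). clear - Hg Ha.
    induction L as [|b L IHL]; simpl; [destruct Ha|].
    assert (Hle : lsum g (remove dec a L) <= lsum g L).
    { clear - Hg. induction L; simpl; [lra|]. destruct (dec a a0); simpl; pose proof (Hg a0); lra. }
    destruct (dec a b) as [<-|Ne]; simpl.
    + pose proof (Hg a); lra.
    + destruct Ha as [->|Ha]; [congruence|]. specialize (IHL Ha). lra.
Qed.

(** * The outer measures [Pm] *)

Definition covers (c : Cover) (A : Seq -> Prop) : Prop :=
  forall w, A w -> exists n, cover_piece c n w.

Definition single_cover (v : Seq) (t : nat) : Cover :=
  fun n => match n with O => Some (v, t) | _ => None end.

Lemma cover_mass_nonneg f0 f1 i c n : 0 <= cover_mass f0 f1 i c n.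
Proof. unfold cover_mass; destruct (c n) as [[v t]|]; [apply cylmass_bounds|lra]. Qed.

Lemma cover_value_nonneg f0 f1 i A r : cover_value f0 f1 i A r -> 0 <= r.
Proof. intros [c [_ H]]. eapply series_nonneg; [|eauto]. apply cover_mass_nonneg. Qed.

Lemma cover_value_single f0 f1 i (A : Seq -> Prop) v t : (forall w, A w -> cyl v t w) ->
  cover_value f0 f1 i A (cylmass f0 f1 i v t).
Proof.
  intros H. exists (single_cover v t); split.
  - intros w Hw; exists 0%nat; apply H, Hw.
  - apply (infinite_sum_first (cover_mass f0 f1 i (single_cover v t))). reflexivity.
Qed.

Lemma Pm_is_inf f0 f1 i A : is_inf (cover_value f0 f1 i A) (Pm f0 f1 i A).
Proof.
  unfold Pm. apply epsilon_spec.
  set (E := fun y => cover_value f0 f1 i A (- y)).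
  assert (Hb : bound E) by (exists 0; intros y Hy; apply cover_value_nonneg in Hy; lra).
  assert (He : exists x, E x).
  { exists (- cylmass f0 f1 i (fun _ => false) 0); unfold E; rewrite Ropp_involutive.
    apply (cover_value_single f0 f1 i A (fun _ => false) 0); intros w _ k Hk; lia. }
  destruct (completeness E Hb He) as [m [Hm1 Hm2]].
  exists (- m); split.
  - intros x Hx. enough (- x <= m) by lra. apply Hm1; unfold E; rewrite Ropp_involutive; auto.
  - intros y Hy. enough (m <= - y) by lra. apply Hm2. intros z Hz. specialize (Hy _ Hz); lra.
Qed.

Lemma Pm_le_cover_value f0 f1 i A r : cover_value f0 f1 i A r -> Pm f0 f1 i A <= r.
Proof. apply (proj1 (Pm_is_inf f0 f1 i A)). Qed.

Lemma Pm_ge_lower_bound f0 f1 i A y :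
  (forall r, cover_value f0 f1 i A r -> y <= r) -> y <= Pm f0 f1 i A.
Proof. apply (proj2 (Pm_is_inf f0 f1 i A)). Qed.

Lemma Pm_nonneg f0 f1 i A : 0 <= Pm f0 f1 i A.
Proof. apply Pm_ge_lower_bound; intros; eapply cover_value_nonneg; eauto. Qed.

Lemma cover_value_near_Pm f0 f1 i A e : e > 0 ->
  exists r, cover_value f0 f1 i A r /\ r < Pm f0 f1 i A + e.
Proof.
  intros He. apply NNPP; intros N.
  enough (Pm f0 f1 i A + e <= Pm f0 f1 i A) by lra.
  apply Pm_ge_lower_bound. intros r Hr. apply Rnot_lt_le. intros Hlt. apply N; eauto.
Qed.

Lemma Pm_mono f0 f1 i (A B : Seq -> Prop) : (forall w, A w -> B w) ->
  Pm f0 f1 i A <= Pm f0 f1 i B.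
Proof.
  intros H. apply Pm_ge_lower_bound. intros r [c [Hc Hs]].
  apply Pm_le_cover_value. exists c; split; auto.
Qed.

Lemma Pm_le_cylmass f0 f1 i (A : Seq -> Prop) v t : (forall w, A w -> cyl v t w) ->
  Pm f0 f1 i A <= cylmass f0 f1 i v t.
Proof. intros H. apply Pm_le_cover_value, cover_value_single, H. Qed.

Lemma Pm_empty f0 f1 i (A : Seq -> Prop) : (forall w, ~ A w) -> Pm f0 f1 i A = 0.
Proof.
  intros H. apply Rle_antisym; [|apply Pm_nonneg]. apply Pm_le_cover_value.
  exists (fun _ => None); split; [intros w Hw; destruct (H w Hw)|].
  apply (infinite_sum_first (cover_mass f0 f1 i (fun _ => None))). reflexivity.
Qed.

Lemma Pm_le_of_forall_cover_value f0 f1 fi g0 g1 gi (A X : Seq -> Prop) K : 0 <= K ->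
  (forall r, cover_value f0 f1 fi A r -> Pm g0 g1 gi X <= K * r) ->
  Pm g0 g1 gi X <= K * Pm f0 f1 fi A.
Proof.
  intros HK Hr. apply Rle_plus_epsilon. intros e He.
  destruct (cover_value_near_Pm f0 f1 fi A (e / (K + 1))) as [r [Hr1 Hr2]].
  { apply Rdiv_lt_0_compat; lra. }
  specialize (Hr r Hr1).
  assert (K * r <= K * (Pm f0 f1 fi A + e / (K + 1))) by (apply Rmult_le_compat_l; lra).
  assert (K * (e / (K + 1)) <= e).
  { unfold Rdiv. rewrite <- Rmult_assoc. apply Rmult_le_reg_r with (K + 1); [lra|].
    rewrite Rmult_assoc, Rinv_l by lra. nra. }
  nra.
Qed.

(* The covers of the [A n] are interleaved along the Cantor pairing of [nat * nat]. *)
Definition merge_covers (C : nat -> Cover) : Cover :=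
  fun k => C (fst (of_nat k)) (snd (of_nat k)).

Lemma merge_covers_partial_sum f0 f1 i (C : nat -> Cover) N :
  sum_f_R0 (cover_mass f0 f1 i (merge_covers C)) N <=
  sum_f_R0 (fun n => sum_f_R0 (cover_mass f0 f1 i (C n)) N) N.
Proof.
  set (h := fun p : nat * nat => cover_mass f0 f1 i (C (fst p)) (snd p)).
  set (I := seq 0 (S N)).
  assert (Hdec : forall x y : nat * nat, {x = y} + {x <> y})
    by (decide equality; apply Nat.eq_dec).
  rewrite !sum_f_R0_lsum. fold I.
  replace (lsum (cover_mass f0 f1 i (merge_covers C)) I) with (lsum h (map of_nat I))
    by (rewrite lsum_map; reflexivity).
  replace (lsum _ I) with (lsum h (list_prod I I)).
  - apply (lsum_incl Hdec).
    + intros p; unfold h; apply cover_mass_nonneg.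
    + apply NoDup_map_NoDup_ForallPairs; [|apply seq_NoDup]. intros x y _ _ E.
      rewrite <- (cancel_to_of x), <- (cancel_to_of y), E; auto.
    + intros p Hp. apply in_map_iff in Hp as [k [<- Hk]]. unfold I in *. apply in_seq in Hk.
      pose proof (to_nat_non_decreasing (fst (of_nat k)) (snd (of_nat k))) as Hb.
      rewrite <- surjective_pairing, cancel_to_of in Hb.
      rewrite (surjective_pairing (of_nat k)). apply in_prod_iff; split; apply in_seq; lia.
  - rewrite lsum_list_prod. apply lsum_ext. intros n _. rewrite lsum_map, sum_f_R0_lsum.
    reflexivity.
Qed.

Lemma Pm_countable_subadditive f0 f1 i (A : nat -> Seq -> Prop) (b : nat -> R) B :
  (forall n, Pm f0 f1 i (A n) <= b n) -> (forall N, sum_f_R0 b N <= B) ->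
  Pm f0 f1 i (fun w => exists n, A n w) <= B.
Proof.
  intros Hb HB. apply Rle_plus_epsilon. intros d Hd.
  set (e := fun n : nat => d * (/2) ^ (S n)).
  assert (He : forall n, e n > 0) by (intros n; apply Rmult_lt_0_compat, pow_lt; lra).
  destruct (choice (fun n c => covers c (A n) /\
             exists r, infinite_sum (cover_mass f0 f1 i c) r /\ r < b n + e n)) as [C HC].
  { intros n. destruct (cover_value_near_Pm f0 f1 i (A n) (e n) (He n))
      as [r [[c [Hc Hs]] Hr]].
    exists c; split; auto. exists r; split; auto. specialize (Hb n); lra. }
  assert (Hsum : forall N, sum_f_R0 (cover_mass f0 f1 i (merge_covers C)) N <= B + d).
  { intros N. eapply Rle_trans; [apply merge_covers_partial_sum|].
    apply Rle_trans with (sum_f_R0 (fun n => b n + e n) N).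
    - apply sum_Rle. intros n _. destruct (HC n) as [_ [r [Hr1 Hr2]]].
      pose proof (sum_incr _ N r Hr1 (cover_mass_nonneg f0 f1 i (C n))). lra.
    - rewrite sum_plus. unfold e; rewrite geometric_partial_sum.
      pose proof (HB N). assert (0 < d * (/2) ^ S N) by (apply Rmult_lt_0_compat, pow_lt; lra).
      lra. }
  destruct (series_of_bounded_partial_sums _ _ (cover_mass_nonneg f0 f1 i _) Hsum)
    as [r [Hr1 Hr2]].
  eapply Rle_trans; [|apply Hr2]. apply Pm_le_cover_value. exists (merge_covers C); split; auto.
  intros w [n Hn]. destruct (proj1 (HC n) w Hn) as [m Hm].
  exists (to_nat (n, m)). unfold cover_piece, merge_covers. rewrite cancel_of_to. exact Hm.
Qed.

Lemma Pm_subadditive f0 f1 i (A B : Seq -> Prop) :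
  Pm f0 f1 i (fun w => A w \/ B w) <= Pm f0 f1 i A + Pm f0 f1 i B.
Proof.
  set (F := fun n => match n with O => A | 1%nat => B | _ => fun _ : Seq => False end).
  eapply Rle_trans.
  { apply Pm_mono with (B := fun w => exists n, F n w).
    intros w [H|H]; [exists 0%nat|exists 1%nat]; auto. }
  apply Pm_countable_subadditive
    with (b := fun n => match n with O => Pm f0 f1 i A | 1%nat => Pm f0 f1 i B | _ => 0 end).
  - intros [|[|n]]; simpl; try lra. rewrite Pm_empty; [lra|tauto].
  - pose proof (Pm_nonneg f0 f1 i B). intros N; induction N as [|N IH]; simpl; [lra|].
    destruct N; simpl in *; lra.
Qed.

(** * Finite words and their masses *)

Definition word_seq (u : list bool) : Seq := fun k => nth k u false.
Definition prefix_word (w : Seq) (n : nat) : list bool := map w (seq 0 n).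

Lemma length_prefix_word w n : length (prefix_word w n) = n.
Proof. unfold prefix_word; rewrite length_map, length_seq; auto. Qed.

Lemma word_seq_prefix_word w n k : (k < n)%nat -> word_seq (prefix_word w n) k = w k.
Proof.
  intros Hk; unfold word_seq, prefix_word.
  rewrite nth_indep with (d' := w 0%nat) by (rewrite length_map, length_seq; auto).
  rewrite map_nth, seq_nth by auto. reflexivity.
Qed.

Lemma firstn_prefix_word w s k : (k <= s)%nat ->
  firstn k (prefix_word w s) = prefix_word w k.
Proof.
  intros H. unfold prefix_word. replace s with (k + (s - k))%nat by lia.
  rewrite seq_app, map_app, firstn_app, length_map, length_seq, Nat.sub_diag,
    firstn_all2 by (rewrite length_map, length_seq; lia).
  simpl. apply app_nil_r.
Qed.

Fixpoint word_of_pos (p : positive) : list bool :=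
  match p with
  | xH => nil
  | xO q => false :: word_of_pos q
  | xI q => true :: word_of_pos q
  end.

Fixpoint pos_of_word (u : list bool) : positive :=
  match u with
  | nil => xH
  | false :: u => xO (pos_of_word u)
  | true :: u => xI (pos_of_word u)
  end.

Lemma word_of_posK u : word_of_pos (pos_of_word u) = u.
Proof. induction u as [|[] u IH]; simpl; congruence. Qed.

Lemma pos_of_wordK p : pos_of_word (word_of_pos p) = p.
Proof. induction p; simpl; congruence. Qed.

Definition word_enum (k : nat) : list bool := word_of_pos (Pos.of_succ_nat k).

Lemma word_enum_inj k k' : word_enum k = word_enum k' -> k = k'.
Proof.
  unfold word_enum; intros H. apply SuccNat2Pos.inj.
  rewrite <- (pos_of_wordK (Pos.of_succ_nat k)), H, pos_of_wordK; auto.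
Qed.

Lemma word_enum_surj u : exists k, word_enum k = u.
Proof.
  destruct (Pos2Nat.is_succ (pos_of_word u)) as [n Hn]. exists n. unfold word_enum.
  rewrite (SuccNat2Pos.inv n (pos_of_word u) Hn). apply word_of_posK.
Qed.

Definition wmass f0 f1 j (u : list bool) : R := cylmass f0 f1 j (word_seq u) (length u).

Lemma wmass_bounds f0 f1 j u : 0 <= wmass f0 f1 j u <= 1.
Proof. apply cylmass_bounds. Qed.

Lemma wmass_prefix_word f0 f1 j w s : wmass f0 f1 j (prefix_word w s) = cylmass f0 f1 j w s.
Proof.
  unfold wmass. rewrite length_prefix_word.
  apply cylmass_ext; intros; apply word_seq_prefix_word; auto.
Qed.

Lemma wmass_snoc f0 f1 j u b : wmass f0 f1 j (u ++ [b]) =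
  wmass f0 f1 j u * dprob (strat j f0 f1 (hist f0 f1 (word_seq u) (length u))) b.
Proof.
  assert (Hu : forall k, (k < length u)%nat -> word_seq (u ++ [b]) k = word_seq u k)
    by (intros; apply app_nth1; auto).
  unfold wmass. rewrite length_app, Nat.add_1_r. simpl.
  rewrite (cylmass_ext f0 f1 j (word_seq (u ++ [b])) (word_seq u)) by auto.
  unfold fprob. rewrite (hist_ext f0 f1 (word_seq (u ++ [b])) (word_seq u)) by auto.
  unfold word_seq at 3. rewrite app_nth2, Nat.sub_diag by lia. reflexivity.
Qed.

Lemma wmass_split f0 f1 j u :
  wmass f0 f1 j u = wmass f0 f1 j (u ++ [false]) + wmass f0 f1 j (u ++ [true]).
Proof. rewrite !wmass_snoc, <- Rmult_plus_distr_l, dprob_false_plus_true; ring. Qed.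

Definition is_prefix (u v : list bool) : Prop := exists x, v = u ++ x.

Definition antichain (l : list (list bool)) : Prop :=
  forall u v, In u l -> In v l -> is_prefix u v -> u = v.

Fixpoint prefixb (u v : list bool) : bool :=
  match u, v with
  | [], _ => true
  | a :: u', b :: v' => Bool.eqb a b && prefixb u' v'
  | _, _ => false
  end.

Lemma prefixbP u v : prefixb u v = true <-> is_prefix u v.
Proof.
  revert v; induction u as [|a u IH]; intros v; simpl.
  - split; auto. intros; exists v; auto.
  - destruct v as [|b v].
    + split; [discriminate|]. intros [x Hx]; discriminate.
    + rewrite Bool.andb_true_iff, IH, Bool.eqb_true_iff. split.
      * intros [-> [x ->]]; exists x; auto.
      * intros [x Hx]. injection Hx as -> ->. split; auto. exists x; auto.
Qed.

Lemma antichain_filter (p : list bool -> bool) l : antichain l -> antichain (filter p l).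
Proof. intros H u v Hu Hv. apply filter_In in Hu, Hv. apply H; tauto. Qed.

Lemma NoDup_all_eq {X} (l : list X) u : NoDup l -> (forall v, In v l -> v = u) ->
  l = [] \/ l = [u].
Proof.
  intros N H. destruct l as [|a [|b l]]; auto.
  - right. f_equal. apply H; simpl; auto.
  - inversion N as [|? ? Ha]. exfalso; apply Ha.
    rewrite (H a), (H b) by (simpl; auto). simpl; auto.
Qed.

(* Induction on the length of the extensions: the mass of a word is the sum of the
   masses of its two one-letter extensions. *)
Lemma lsum_wmass_antichain_extending f0 f1 j d : forall u l, NoDup l -> antichain l ->
  (forall v, In v l -> exists x, v = u ++ x /\ (length x <= d)%nat) ->
  lsum (wmass f0 f1 j) l <= wmass f0 f1 j u.
Proof.
  induction d as [|d IH]; intros u l N A H.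
  - destruct (NoDup_all_eq l u N) as [->| ->]; simpl;
      try (pose proof (wmass_bounds f0 f1 j u); lra).
    intros v Hv. destruct (H v Hv) as [[|b x] [-> Hx]]; [apply app_nil_r|simpl in Hx; lia].
  - destruct (in_dec (list_eq_dec Bool.bool_dec) u l) as [I|NI].
    { destruct (NoDup_all_eq l u N) as [->| ->]; simpl;
        try (pose proof (wmass_bounds f0 f1 j u); lra).
      intros v Hv. symmetry. apply A; auto. destruct (H v Hv) as [x [E _]]. exists x; exact E. }
    set (p := fun v : list bool => nth (length u) v false).
    assert (Hext : forall b v, In v l -> p v = b -> exists x, v = (u ++ [b]) ++ x /\ (length x <= d)%nat).
    { intros b v Hv Pv. destruct (H v Hv) as [[|b' x] [-> Hx]]; [rewrite app_nil_r in Hv; tauto|].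
      unfold p in Pv. rewrite app_nth2, Nat.sub_diag in Pv by lia. simpl in Pv. subst b'.
      exists x; split; [rewrite <- app_assoc; auto|simpl in Hx; lia]. }
    rewrite (lsum_filter _ p l), (wmass_split f0 f1 j u), Rplus_comm.
    apply Rplus_le_compat; apply IH; auto using NoDup_filter, antichain_filter;
      intros v Hv; apply filter_In in Hv as [Hv Pv]; apply (Hext _ v Hv);
      destruct (p v); simpl in Pv; congruence.
Qed.

Lemma In_le_list_max x l : In x l -> (x <= list_max l)%nat.
Proof.
  intros H. pose proof (proj1 (list_max_le l (list_max l)) (Nat.le_refl _)) as Hl.
  rewrite Forall_forall in Hl. auto.
Qed.

Lemma lsum_wmass_antichain f0 f1 j l : NoDup l -> antichain l -> lsum (wmass f0 f1 j) l <= 1.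
Proof.
  intros N A. change 1 with (wmass f0 f1 j []).
  apply (lsum_wmass_antichain_extending f0 f1 j (list_max (map (@length bool) l))); auto.
  intros v Hv; exists v; split; auto. apply In_le_list_max, in_map, Hv.
Qed.

Lemma lsum_wmass_antichain_refining f0 f1 j S : forall l, NoDup l -> antichain l ->
  (forall v, In v l -> exists u, In u S /\ is_prefix u v) ->
  lsum (wmass f0 f1 j) l <= lsum (wmass f0 f1 j) S.
Proof.
  induction S as [|u S IH]; intros l N A H.
  - destruct l as [|v l]; [simpl; lra|]. destruct (H v (or_introl eq_refl)) as [u [[] _]].
  - rewrite (lsum_filter _ (prefixb u) l). simpl. apply Rplus_le_compat.
    + apply (lsum_wmass_antichain_extending f0 f1 j (list_max (map (@length bool) l)));
        auto using NoDup_filter, antichain_filter.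
      intros v Hv. apply filter_In in Hv as [Hv Pv]. apply prefixbP in Pv as [x ->].
      exists x; split; auto.
      eapply Nat.le_trans; [|apply In_le_list_max, in_map, Hv]. rewrite length_app; lia.
    + apply IH; auto using NoDup_filter, antichain_filter.
      intros v Hv. apply filter_In in Hv as [Hv Pv]. destruct (H v Hv) as [u' [[<-|I] Hp]].
      * apply prefixbP in Hp. rewrite Hp in Pv; discriminate.
      * exists u'; auto.
Qed.

Lemma lsum_filter_if {X} (g : X -> R) (p : X -> bool) l :
  lsum (fun x => if p x then g x else 0) l = lsum g (filter p l).
Proof. induction l; simpl; auto. destruct (p a); simpl; rewrite IHl; ring. Qed.

Definition word_cover (P : list bool -> Prop) : Cover := fun k =>
  if excluded_middle_informative (P (word_enum k))
  then Some (word_seq (word_enum k), length (word_enum k)) else None.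

Lemma word_cover_partial_sum f0 f1 j (P : list bool -> Prop) N :
  exists l, NoDup l /\ (forall u, In u l -> P u) /\
    sum_f_R0 (cover_mass f0 f1 j (word_cover P)) N = lsum (wmass f0 f1 j) l.
Proof.
  set (pb := fun u => if excluded_middle_informative (P u) then true else false).
  exists (filter pb (map word_enum (seq 0 (S N)))); split; [|split].
  - apply NoDup_filter, NoDup_map_NoDup_ForallPairs; [|apply seq_NoDup].
    intros k k' _ _; apply word_enum_inj.
  - intros u Hu. apply filter_In in Hu as [_ Hu]. unfold pb in Hu.
    destruct (excluded_middle_informative (P u)); [auto|discriminate].
  - rewrite sum_f_R0_lsum, <- lsum_filter_if, lsum_map. apply lsum_ext. intros k _.
    unfold cover_mass, word_cover, pb. destruct (excluded_middle_informative _); reflexivity.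
Qed.

Lemma Pm_le_word_bound f0 f1 j (P : list bool -> Prop) B :
  (forall l, NoDup l -> (forall u, In u l -> P u) -> lsum (wmass f0 f1 j) l <= B) ->
  Pm f0 f1 j (fun w => exists s, P (prefix_word w s)) <= B.
Proof.
  intros HB.
  assert (Hsum : forall N, sum_f_R0 (cover_mass f0 f1 j (word_cover P)) N <= B).
  { intros N. destruct (word_cover_partial_sum f0 f1 j P N) as [l [Hl [HP ->]]]. auto. }
  destruct (series_of_bounded_partial_sums _ _ (cover_mass_nonneg f0 f1 j _) Hsum)
    as [r [Hr1 Hr2]].
  eapply Rle_trans; [|apply Hr2]. apply Pm_le_cover_value. exists (word_cover P); split; auto.
  intros w [s Hs]. destruct (word_enum_surj (prefix_word w s)) as [k Hk]. exists k.
  unfold cover_piece, word_cover. rewrite Hk.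
  destruct (excluded_middle_informative _) as [_|]; [|tauto].
  rewrite length_prefix_word. intros m Hm. rewrite word_seq_prefix_word; auto.
Qed.

Definition first_hit (hit : list bool -> Prop) (u : list bool) : Prop :=
  hit u /\ forall k, (k < length u)%nat -> ~ hit (firstn k u).

Lemma first_hit_antichain hit l : (forall u, In u l -> first_hit hit u) -> antichain l.
Proof.
  intros H u v Hu Hv [[|b x] ->]; [symmetry; apply app_nil_r|].
  exfalso. apply (proj2 (H _ Hv) (length u)); [rewrite length_app; simpl; lia|].
  rewrite firstn_app, Nat.sub_diag, firstn_all. simpl. rewrite app_nil_r. apply H, Hu.
Qed.

Lemma exists_first_hit hit w : (exists s, hit (prefix_word w s)) ->
  exists s, first_hit hit (prefix_word w s).
Proof.
  intros E.
  destruct (Wf_nat.dec_inh_nat_subset_has_unique_least_element (fun s => hit (prefix_word w s))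
    (fun n => classic _) E) as [s [[Hs Hmin] _]].
  exists s; split; auto. intros k Hk Hh. rewrite length_prefix_word in Hk.
  rewrite firstn_prefix_word in Hh by lia. specialize (Hmin k Hh). lia.
Qed.

(** * Comparing outer measures *)

Lemma Pm_le_scaled g0 g1 gi f0 f1 fi (X : Seq -> Prop) K : 0 <= K ->
  (forall v t, (exists w, X w /\ cyl v t w) -> exists v' t',
     (forall w, X w -> cyl v t w -> cyl v' t' w) /\
     cylmass g0 g1 gi v' t' <= K * cylmass f0 f1 fi v t) ->
  Pm g0 g1 gi X <= K * Pm f0 f1 fi X.
Proof.
  intros HK H. apply Pm_le_of_forall_cover_value; auto. intros r [c [Hc Hs]].
  destruct (choice (fun n (o : option (Seq * nat)) =>
      (forall w, X w -> cover_piece c n w -> cover_piece (fun _ => o) 0 w) /\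
      cover_mass g0 g1 gi (fun _ => o) 0 <= K * cover_mass f0 f1 fi c n)) as [c' Hc'].
  { intros n. unfold cover_piece, cover_mass. destruct (c n) as [[v t]|].
    - destruct (classic (exists w, X w /\ cyl v t w)) as [E|E].
      + destruct (H v t E) as [v' [t' [H1 H2]]]. exists (Some (v', t')); split; auto.
      + exists None; split; [intros w Xw Cw; apply E; eauto|].
        pose proof (cylmass_bounds f0 f1 fi v t). simpl; nra.
    - exists None; split; [tauto|simpl; lra]. }
  assert (Hsum : forall N, sum_f_R0 (cover_mass g0 g1 gi c') N <= K * r).
  { intros N. apply Rle_trans with (K * sum_f_R0 (cover_mass f0 f1 fi c) N).
    - rewrite scal_sum. apply sum_Rle. intros n _. rewrite Rmult_comm. apply (proj2 (Hc' n)).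
    - apply Rmult_le_compat_l; auto. apply sum_incr; auto. apply cover_mass_nonneg. }
  destruct (series_of_bounded_partial_sums _ _ (cover_mass_nonneg g0 g1 gi c') Hsum)
    as [r' [Hr1 Hr2]].
  eapply Rle_trans; [|apply Hr2]. apply Pm_le_cover_value. exists c'; split; auto.
  intros w Xw. destruct (Hc w Xw) as [n Hn]. exists n. apply (proj1 (Hc' n)); auto.
Qed.

(** * Likelihood ratios *)

Definition fpos f0 f1 j (w : Seq) : Prop := forall n, fprob f0 f1 j w n > 0.

Definition wratio f0 f1 j (u : list bool) : R := Dt f0 f1 j (word_seq u) (length u).

Lemma Dt_nonneg f0 f1 j w n : 0 <= Dt f0 f1 j w n.
Proof.
  induction n; simpl; [lra|]. apply Rmult_le_pos; auto.
  pose proof (fprob_bounds f0 f1 (negb j) w n). pose proof (fprob_bounds f0 f1 j w n).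
  apply Rmult_le_pos; [lra|].
  destruct (Req_dec (fprob f0 f1 j w n) 0) as [E|E]; [rewrite E, Rinv_0; lra|].
  apply Rlt_le, Rinv_0_lt_compat; lra.
Qed.

Lemma cylmass_negb f0 f1 j w n : cylmass f0 f1 j w n > 0 ->
  cylmass f0 f1 (negb j) w n = Dt f0 f1 j w n * cylmass f0 f1 j w n.
Proof.
  induction n; intros H; simpl; [ring|].
  assert (Hf : fprob f0 f1 j w n > 0) by (apply (fprob_pos_of_cylmass f0 f1 j w (S n)); auto).
  assert (Hc : cylmass f0 f1 j w n > 0).
  { simpl in H. pose proof (cylmass_bounds f0 f1 j w n). pose proof (fprob_bounds f0 f1 j w n).
    nra. }
  rewrite IHn by auto. field. lra.
Qed.

Lemma wratio_prefix_word f0 f1 j w s : wratio f0 f1 j (prefix_word w s) = Dt f0 f1 j w s.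
Proof.
  unfold wratio. rewrite length_prefix_word.
  apply Dt_ext; intros; apply word_seq_prefix_word; auto.
Qed.

Lemma wmass_negb f0 f1 j u : wmass f0 f1 j u > 0 ->
  wmass f0 f1 (negb j) u = wratio f0 f1 j u * wmass f0 f1 j u.
Proof. apply cylmass_negb. Qed.

Lemma lsum_wmass_ratio_lt f0 f1 j a l :
  (forall u, In u l -> wmass f0 f1 j u > 0 /\ wratio f0 f1 j u < a) ->
  lsum (wmass f0 f1 (negb j)) l <= a * lsum (wmass f0 f1 j) l.
Proof.
  intros H. rewrite <- lsum_scal. apply lsum_le. intros u Hu.
  destruct (H u Hu). rewrite wmass_negb by auto. apply Rmult_le_compat_r; lra.
Qed.

Lemma lsum_wmass_ratio_ge f0 f1 j b l : b > 0 ->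
  (forall u, In u l -> wmass f0 f1 j u > 0 /\ wratio f0 f1 j u >= b) ->
  lsum (wmass f0 f1 j) l <= / b * lsum (wmass f0 f1 (negb j)) l.
Proof.
  intros Hb H. rewrite <- lsum_scal. apply lsum_le. intros u Hu.
  destruct (H u Hu). rewrite wmass_negb by auto.
  apply Rmult_le_reg_l with b; [lra|]. field_simplify; nra.
Qed.

Lemma cv0_iff_eventually_lt_inv (u : nat -> R) : (forall n, 0 <= u n) ->
  (Un_cv u 0 <-> forall m, exists N, forall n, (n >= N)%nat -> u n < / INR (S m)).
Proof.
  intros Hu. split; intros H.
  - intros m. destruct (H (/ INR (S m))) as [N HN]; [apply Rinv_0_lt_compat, lt_0_INR; lia|].
    exists N; intros n Hn. specialize (HN n Hn). unfold Rdist in HN.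
    rewrite Rminus_0_r, Rabs_right in HN; auto. apply Rle_ge, Hu.
  - intros e He. destruct (archimed_cor1 e He) as [[|m] [Hm1 Hm2]]; [lia|].
    destruct (H m) as [N HN]. exists N; intros n Hn.
    unfold Rdist. rewrite Rminus_0_r, Rabs_right by apply Rle_ge, Hu.
    specialize (HN n Hn); lra.
Qed.

Lemma Dzero_iff f0 f1 j w : Dzero f0 f1 j w <->
  fpos f0 f1 j w /\ forall m, exists N, forall n, (n >= N)%nat -> Dt f0 f1 j w n < / INR (S m).
Proof.
  unfold Dzero. rewrite cv0_iff_eventually_lt_inv by apply Dt_nonneg. reflexivity.
Qed.

Lemma not_cv0_frequently_ge (u : nat -> R) : (forall n, 0 <= u n) -> ~ Un_cv u 0 ->
  exists m, forall N, exists n, (n >= N)%nat /\ u n >= / INR (S m).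
Proof.
  intros Hu Hc. rewrite cv0_iff_eventually_lt_inv in Hc by auto.
  apply NNPP; intros Hn. apply Hc. intros m. apply NNPP; intros Hm. apply Hn.
  exists m. intros N. apply NNPP; intros HN. apply Hm. exists N. intros n Hn'.
  apply Rnot_ge_lt. intros Hge. apply HN; eauto.
Qed.

Definition ratio_below f0 f1 j a (u : list bool) : Prop :=
  wmass f0 f1 j u > 0 /\ wratio f0 f1 j u < a.

Lemma Pm_Dzero_null f0 f1 j : Pm f0 f1 (negb j) (Dzero f0 f1 j) = 0.
Proof.
  apply Rle_antisym; [|apply Pm_nonneg].
  apply Rnot_lt_le; intros Hlt. set (d := Pm f0 f1 (negb j) (Dzero f0 f1 j)) in *.
  set (hit := ratio_below f0 f1 j (d / 2)).
  assert (Pm f0 f1 (negb j) (fun w => exists s, first_hit hit (prefix_word w s)) <= d / 2).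
  { apply Pm_le_word_bound. intros l N Hl.
    eapply Rle_trans; [apply lsum_wmass_ratio_lt; intros u Hu; apply (Hl u Hu)|].
    pose proof (lsum_wmass_antichain f0 f1 j l N (first_hit_antichain hit l Hl)).
    pose proof (lsum_nonneg (wmass f0 f1 j) l (fun u => proj1 (wmass_bounds f0 f1 j u))). nra. }
  enough (d <= Pm f0 f1 (negb j) (fun w => exists s, first_hit hit (prefix_word w s))) by lra.
  apply Pm_mono. intros w [Hp Hc]. apply exists_first_hit.
  destruct (Hc (d / 2) ltac:(lra)) as [N HN]. exists N. specialize (HN N (Nat.le_refl _)).
  unfold Rdist in HN. rewrite Rminus_0_r in HN. pose proof (Rle_abs (Dt f0 f1 j w N)).
  unfold hit, ratio_below. rewrite wmass_prefix_word, wratio_prefix_word.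
  split; [apply cylmass_pos; intros; apply Hp|lra].
Qed.

Lemma Pm_not_fpos_null f0 f1 j : Pm f0 f1 j (fun w => ~ fpos f0 f1 j w) = 0.
Proof.
  apply Rle_antisym; [|apply Pm_nonneg].
  apply Rle_trans with (Pm f0 f1 j (fun w => exists s, wmass f0 f1 j (prefix_word w s) = 0)).
  - apply Pm_mono. intros w Hw. apply not_all_ex_not in Hw as [n Hn].
    exists (S n). rewrite wmass_prefix_word. simpl. pose proof (fprob_bounds f0 f1 j w n).
    replace (fprob f0 f1 j w n) with 0 by lra. ring.
  - apply (Pm_le_word_bound f0 f1 j (fun u => wmass f0 f1 j u = 0)). intros l _ Hl.
    rewrite (lsum_ext _ (fun _ => 0)) by auto. clear Hl; induction l; simpl; lra.
Qed.

Lemma Pm_le_of_ratio_bounded_below f0 f1 j (B : Seq -> Prop) a : a > 0 ->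
  (forall w, B w -> fpos f0 f1 j w /\ forall s, Dt f0 f1 j w s >= a) ->
  Pm f0 f1 j B <= / a * Pm f0 f1 (negb j) B.
Proof.
  intros Ha HB. apply Pm_le_scaled; [left; apply Rinv_0_lt_compat; lra|].
  intros v t [w [Bw Cw]]. exists v, t; split; auto.
  destruct (HB w Bw) as [Pw Hw]. specialize (Hw t).
  rewrite !(cylmass_ext f0 f1 _ v w) by (intros; symmetry; apply Cw; auto).
  assert (Hc : cylmass f0 f1 j w t > 0) by (apply cylmass_pos; intros; apply Pw).
  rewrite (cylmass_negb f0 f1 j w t Hc).
  apply Rmult_le_reg_l with a; [lra|]. rewrite <- Rmult_assoc, Rinv_r by lra. nra.
Qed.

Definition ratio_upcross f0 f1 j a b (u : list bool) : Prop :=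
  wmass f0 f1 j u > 0 /\ wratio f0 f1 j u >= b /\
  exists k, (k < length u)%nat /\ first_hit (ratio_below f0 f1 j a) (firstn k u).

(* The words on which the ratio first drops below [a] carry [P_(negb j)]-mass at most
   [a], and extending them until it first climbs back above [b] costs [P_j]-mass at
   most [/ b] times that. *)
Lemma Pm_upcross_le f0 f1 j a b : a > 0 -> b > 0 ->
  Pm f0 f1 j (fun w => exists s, first_hit (ratio_upcross f0 f1 j a b) (prefix_word w s))
    <= a / b.
Proof.
  intros Ha Hb. apply Pm_le_word_bound. intros l N Hl.
  destruct (choice (fun u u1 =>
      In u l -> is_prefix u1 u /\ first_hit (ratio_below f0 f1 j a) u1)) as [p1 Hp1].
  { intros u. destruct (classic (In u l)) as [Hu|Hu]; [|exists u; tauto].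
    destruct (Hl u Hu) as [[_ [_ [k [_ Hk]]]] _]. exists (firstn k u); intros _; split; auto.
    exists (skipn k u). symmetry; apply firstn_skipn. }
  set (S1 := nodup (list_eq_dec Bool.bool_dec) (map p1 l)).
  assert (HS1 : forall u1, In u1 S1 -> first_hit (ratio_below f0 f1 j a) u1).
  { intros u1 Hu1. unfold S1 in Hu1. rewrite nodup_In, in_map_iff in Hu1.
    destruct Hu1 as [u [<- Hu]]. apply Hp1, Hu. }
  assert (Hbinv : / b > 0) by (apply Rinv_0_lt_compat; lra).
  apply Rle_trans with (/ b * lsum (wmass f0 f1 (negb j)) l).
  { apply lsum_wmass_ratio_ge; auto. intros u Hu. destruct (Hl u Hu) as [[? [? _]] _]; auto. }
  apply Rle_trans with (/ b * lsum (wmass f0 f1 (negb j)) S1).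
  { apply Rmult_le_compat_l; [lra|].
    apply lsum_wmass_antichain_refining; [exact N|exact (first_hit_antichain _ l Hl)|].
    intros u Hu. exists (p1 u); split; [|apply Hp1, Hu].
    unfold S1; rewrite nodup_In; apply in_map, Hu. }
  apply Rle_trans with (/ b * (a * lsum (wmass f0 f1 j) S1)).
  { apply Rmult_le_compat_l; [lra|]. apply lsum_wmass_ratio_lt. intros u Hu; apply HS1, Hu. }
  pose proof (lsum_wmass_antichain f0 f1 j S1 (NoDup_nodup _ _) (first_hit_antichain _ _ HS1)).
  assert (0 <= / b * a * (1 - lsum (wmass f0 f1 j) S1))
    by (apply Rmult_le_pos; [apply Rmult_le_pos|]; lra).
  unfold Rdiv. nra.
Qed.

Lemma upcross_of_frequently_ge f0 f1 j a b w : fpos f0 f1 j w ->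
  (exists s, Dt f0 f1 j w s < a) ->
  (forall N, exists n, (n >= N)%nat /\ Dt f0 f1 j w n >= b) ->
  exists s, first_hit (ratio_upcross f0 f1 j a b) (prefix_word w s).
Proof.
  intros Pw [s Hs] Hfreq.
  assert (Hm : forall n, wmass f0 f1 j (prefix_word w n) > 0)
    by (intros; rewrite wmass_prefix_word; apply cylmass_pos; intros; apply Pw).
  destruct (exists_first_hit (ratio_below f0 f1 j a) w) as [s1 Hs1].
  { exists s. split; [apply Hm|rewrite wratio_prefix_word; lra]. }
  apply exists_first_hit. destruct (Hfreq (S s1)) as [n [Hn Hd]].
  exists n. split; [apply Hm|split; [rewrite wratio_prefix_word; auto|]].
  exists s1. rewrite length_prefix_word, firstn_prefix_word by lia. split; [lia|auto].
Qed.

(* On [X] the ratio exceeds some [/ INR (S m)] infinitely often.  For every [a > 0],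
   the part of [X] where it never drops below [a] is [P_j]-null because it is
   [P_(negb j)]-null, and the rest upcrosses from below [a] to above [/ INR (S m)]. *)
Lemma Pm_null_of_ratio_not_cv0 f0 f1 j (X : Seq -> Prop) :
  (forall w, X w -> fpos f0 f1 j w /\ ~ Un_cv (Dt f0 f1 j w) 0) ->
  Pm f0 f1 (negb j) X = 0 -> Pm f0 f1 j X = 0.
Proof.
  intros HX H0.
  set (L := fun m w => forall N, exists n, (n >= N)%nat /\ Dt f0 f1 j w n >= / INR (S m)).
  assert (HL : forall m, Pm f0 f1 j (fun w => X w /\ L m w) = 0).
  { intros m. set (b := / INR (S m)).
    assert (Hb : b > 0) by (apply Rinv_0_lt_compat, lt_0_INR; lia).
    assert (Ha : forall a, a > 0 -> Pm f0 f1 j (fun w => X w /\ L m w) <= a / b).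
    { intros a Ha. set (Xa := fun w => X w /\ forall s, Dt f0 f1 j w s >= a).
      assert (HXa : Pm f0 f1 j Xa <= 0).
      { eapply Rle_trans; [apply Pm_le_of_ratio_bounded_below; eauto|].
        - intros w [Xw Hw]. split; [apply HX|]; auto.
        - rewrite <- H0. pose proof (Pm_mono f0 f1 (negb j) Xa X (fun w Hw => proj1 Hw)).
          pose proof (Pm_nonneg f0 f1 (negb j) Xa).
          pose proof (Rinv_0_lt_compat a Ha). nra. }
      eapply Rle_trans; [apply (Pm_mono _ _ _ _ (fun w => Xa w \/
                          exists s, first_hit (ratio_upcross f0 f1 j a b) (prefix_word w s)))|].
      - intros w [Xw Lw]. destruct (classic (forall s, Dt f0 f1 j w s >= a)) as [E|E];
          [left; split; auto|right].
        apply not_all_ex_not in E as [s Hs].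
        apply upcross_of_frequently_ge; [apply HX, Xw|exists s; lra|apply Lw].
      - eapply Rle_trans; [apply Pm_subadditive|].
        pose proof (Pm_upcross_le f0 f1 j a b Ha Hb). lra. }
    apply Rle_antisym; [|apply Pm_nonneg]. apply Rle_plus_epsilon; intros e He.
    rewrite Rplus_0_l. replace e with (e * b / b) by (field; lra). apply Ha. nra. }
  apply Rle_antisym; [|apply Pm_nonneg].
  eapply Rle_trans; [apply (Pm_mono _ _ _ _ (fun w => exists m, X w /\ L m w))|].
  - intros w Xw. destruct (HX w Xw) as [_ Nc].
    destruct (not_cv0_frequently_ge _ (Dt_nonneg f0 f1 j w) Nc) as [m Hm]. eauto.
  - apply (Pm_countable_subadditive _ _ _ _ (fun _ => 0)); [intros; rewrite HL; lra|].
    intros; rewrite sum_eq_R0; auto; lra.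
Qed.

Lemma Dt_cv0_of_not_fpos f0 f1 j w : ~ fpos f0 f1 (negb j) w -> Un_cv (Dt f0 f1 j w) 0.
Proof.
  intros N. apply not_all_ex_not in N as [k Hk].
  assert (Hk0 : fprob f0 f1 (negb j) w k = 0)
    by (pose proof (fprob_bounds f0 f1 (negb j) w k); lra).
  assert (Z : forall n, (n > k)%nat -> Dt f0 f1 j w n = 0).
  { induction n; intros Hn; [lia|]. simpl. destruct (Nat.eq_dec n k) as [->|Ne].
    - rewrite Hk0. unfold Rdiv; ring.
    - rewrite IHn by lia. ring. }
  intros e He. exists (S k). intros n Hn. rewrite Z by lia.
  unfold Rdist. rewrite Rminus_0_r, Rabs_R0; lra.
Qed.

Lemma Dt_mul_Dt f0 f1 w n : fpos f0 f1 true w -> fpos f0 f1 false w ->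
  Dt f0 f1 true w n * Dt f0 f1 false w n = 1.
Proof.
  intros P1 P0. induction n; simpl; [ring|].
  specialize (P1 n); specialize (P0 n). rewrite <- IHn. field. lra.
Qed.

Lemma Dzero_true_false f0 f1 w : Dzero f0 f1 true w -> ~ Dzero f0 f1 false w.
Proof.
  intros [P1 C1] [P0 C0].
  destruct (C1 (/2) ltac:(lra)) as [N1 H1]. destruct (C0 (/2) ltac:(lra)) as [N0 H0].
  set (n := Nat.max N1 N0).
  specialize (H1 n ltac:(lia)). specialize (H0 n ltac:(lia)). unfold Rdist in *.
  rewrite Rminus_0_r, Rabs_right in H1, H0 by apply Rle_ge, Dt_nonneg.
  pose proof (Dt_mul_Dt f0 f1 w n P1 P0).
  pose proof (Dt_nonneg f0 f1 true w n). pose proof (Dt_nonneg f0 f1 false w n). nra.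
Qed.

Lemma Dtest_Dzero f0 f1 i w : Dzero f0 f1 i w -> Dtest w f0 f1 = vof i.
Proof.
  intros H. unfold Dtest.
  destruct (excluded_middle_informative (Dzero f0 f1 true w)) as [E|E];
    destruct i; try tauto; [exfalso; apply (Dzero_true_false f0 f1 w); auto|].
  destruct (excluded_middle_informative (Dzero f0 f1 false w)); tauto.
Qed.

Lemma Dtest_half f0 f1 w : ~ Dzero f0 f1 true w -> ~ Dzero f0 f1 false w ->
  Dtest w f0 f1 = Vhalf.
Proof.
  intros H1 H0. unfold Dtest.
  destruct (excluded_middle_informative (Dzero f0 f1 true w)); [tauto|].
  destruct (excluded_middle_informative (Dzero f0 f1 false w)); tauto.
Qed.

(** * Measurability *)

Lemma measurable_empty : measurable (fun _ => False).
Proof.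
  apply (meas_ext (fun w => ~ cyl (fun _ => false) 0 w)); [apply meas_compl, meas_cyl|].
  intros w; split; [|tauto]. intros H; apply H; intros k Hk; lia.
Qed.

Lemma measurable_and (A B : Seq -> Prop) : measurable A -> measurable B ->
  measurable (fun w => A w /\ B w).
Proof.
  intros HA HB.
  apply (meas_ext (fun w => ~ exists n, ~ (match n with O => A | _ => B end) w)).
  - apply meas_compl, meas_union. intros [|n]; apply meas_compl; auto.
  - intros w; split.
    + intros H; split; apply NNPP; intros N; apply H; [exists 0%nat|exists 1%nat]; auto.
    + intros [HAw HBw] [[|n] Hn]; auto.
Qed.

Lemma measurable_forall (A : nat -> Seq -> Prop) : (forall n, measurable (A n)) ->
  measurable (fun w => forall n, A n w).
Proof.
  intros H. apply (meas_ext (fun w => ~ exists n, ~ A n w)).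
  - apply meas_compl, meas_union; intros; apply meas_compl; auto.
  - intros w; split; [|intros H1 [n Hn]; auto].
    intros H1 n; apply NNPP; intros H2; apply H1; eauto.
Qed.

Lemma measurable_of_prefix n (X : Seq -> Prop) :
  (forall w w', (forall k, (k < n)%nat -> w k = w' k) -> X w -> X w') -> measurable X.
Proof.
  intros HX.
  apply (meas_ext (fun w => exists k, (X (word_seq (word_enum k)) /\
           length (word_enum k) = n) /\ cyl (word_seq (word_enum k)) n w)).
  - apply meas_union. intros k.
    destruct (classic (X (word_seq (word_enum k)) /\ length (word_enum k) = n)) as [E|E].
    + apply (meas_ext (cyl (word_seq (word_enum k)) n)); [apply meas_cyl|]. intros w; tauto.
    + apply (meas_ext (fun _ => False)); [apply measurable_empty|]. intros w; tauto.
  - intros w; split.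
    + intros [k [[Xk Lk] Ck]]. apply (HX (word_seq (word_enum k))); auto.
      intros m Hm; symmetry; apply Ck; auto.
    + intros Xw. destruct (word_enum_surj (prefix_word w n)) as [k Hk].
      exists k. rewrite Hk, length_prefix_word. split; [split; auto|].
      * apply (HX w); auto. intros; symmetry; apply word_seq_prefix_word; auto.
      * intros m Hm; rewrite word_seq_prefix_word; auto.
Qed.

Lemma measurable_Dzero f0 f1 j : measurable (Dzero f0 f1 j).
Proof.
  apply (meas_ext (fun w => fpos f0 f1 j w /\
           forall m, exists N, forall n, (n >= N)%nat -> Dt f0 f1 j w n < / INR (S m))).
  2:{ intros w; rewrite Dzero_iff; tauto. }
  apply measurable_and.
  - apply measurable_forall. intros n. apply (measurable_of_prefix (S n)). intros w w' H Hw.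
    rewrite <- (fprob_ext f0 f1 j w w'); auto. intros; apply H; lia.
  - apply measurable_forall; intros m. apply meas_union; intros N.
    apply measurable_forall; intros n. destruct (Compare_dec.le_lt_dec N n) as [Hn|Hn].
    + apply (meas_ext (fun w => Dt f0 f1 j w n < / INR (S m))).
      * apply (measurable_of_prefix n). intros w w' H Hw. rewrite <- (Dt_ext f0 f1 j w w'); auto.
      * intros w; split; [|intros H; apply H; lia]. intros H _; auto.
    + apply (meas_ext (fun _ => ~ False)); [apply meas_compl, measurable_empty|].
      intros w; split; auto. intros _ H; lia.
Qed.

(** * Concentrating a forecaster on a cylinder *)

Lemma exists_dense_cylinder f0 f1 j (X : Seq -> Prop) th : Pm f0 f1 j X > 0 -> 0 < th < 1 ->
  exists v t, Pm f0 f1 j (fun w => X w /\ cyl v t w) > th * cylmass f0 f1 j v t.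
Proof.
  intros HX Hth. apply NNPP; intros N.
  assert (Hall : forall v t, Pm f0 f1 j (fun w => X w /\ cyl v t w) <= th * cylmass f0 f1 j v t).
  { intros v t. apply Rnot_lt_le. intros H; apply N; exists v, t; auto. }
  set (P := Pm f0 f1 j X) in *.
  destruct (cover_value_near_Pm f0 f1 j X (P / th - P)) as [r [[c [Hc Hs]] Hr]].
  { enough (P / th > P) by lra. apply Rmult_lt_reg_l with th; [lra|]. field_simplify; nra. }
  set (A := fun n w => X w /\ cover_piece c n w).
  assert (H1 : Pm f0 f1 j (fun w => exists n, A n w) <= th * r).
  { apply Pm_countable_subadditive with (b := fun n => th * cover_mass f0 f1 j c n).
    - intros n. unfold A, cover_piece, cover_mass. destruct (c n) as [[v t]|].
      + apply Hall.
      + rewrite Pm_empty; [lra|tauto].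
    - intros N0. rewrite sum_f_R0_lsum, lsum_scal, <- sum_f_R0_lsum.
      apply Rmult_le_compat_l; [lra|].
      apply sum_incr; auto. apply cover_mass_nonneg. }
  assert (H2 : P <= Pm f0 f1 j (fun w => exists n, A n w)).
  { apply Pm_mono. intros w Xw. destruct (Hc w Xw) as [n Hn]. exists n; split; auto. }
  fold P in Hr. assert (th * r < th * (P / th)) by (apply Rmult_lt_compat_l; lra).
  replace (th * (P / th)) with P in * by (field; lra). lra.
Qed.

Lemma bernoulli_ineq x n : 0 <= x <= 1 -> 1 - INR n * x <= (1 - x) ^ n.
Proof.
  intros H; induction n; [simpl; lra|]. rewrite S_INR. simpl.
  pose proof (pos_INR n). apply Rle_trans with ((1 - x) * (1 - INR n * x)); nra.
Qed.

Lemma exists_pow_ge rho n : 0 < rho < 1 -> exists q, 0 < q < 1 /\ rho <= q ^ n.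
Proof.
  intros Hrho. set (x := (1 - rho) / INR (S n)).
  assert (HSn : INR (S n) >= 1) by (rewrite S_INR; pose proof (pos_INR n); lra).
  assert (Hx : 0 < x <= 1 - rho).
  { unfold x; split; [apply Rdiv_lt_0_compat; lra|].
    apply Rmult_le_reg_r with (INR (S n)); [lra|]. field_simplify; nra. }
  exists (1 - x); split; [lra|].
  pose proof (bernoulli_ineq x n ltac:(lra)).
  assert (INR n * x <= 1 - rho).
  { replace (1 - rho) with (INR (S n) * x) by (unfold x; field; lra). rewrite S_INR. lra. }
  lra.
Qed.

Lemma pow_le_one x n : 0 <= x <= 1 -> x ^ n <= 1.
Proof.
  intros H; induction n; simpl; [lra|].
  rewrite <- (Rmult_1_r 1). apply Rmult_le_compat; try lra. apply pow_le; lra.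
Qed.

Definition clamp (x : R) : R := Rmax 0 (Rmin 1 x).

Lemma clamp_bounds x : 0 <= clamp x <= 1.
Proof. unfold clamp, Rmax, Rmin. repeat destruct Rle_dec; lra. Qed.

Lemma clamp_id x : 0 <= x <= 1 -> clamp x = x.
Proof. intros H; unfold clamp, Rmax, Rmin. repeat destruct Rle_dec; lra. Qed.

Definition mkdist (x : R) : Dist := exist _ (clamp x) (clamp_bounds x).

Definition hist_outcomes (h : list Entry) : Seq :=
  fun k => nth k (map (fun e => fst (fst e)) h) false.

Lemma map_outcome_hist g0 g1 w n :
  map (fun e => fst (fst e)) (hist g0 g1 w n) = prefix_word w n.
Proof.
  induction n; simpl; auto.
  unfold prefix_word in *. rewrite map_app, (seq_S n 0), map_app. f_equal. exact IHn.
Qed.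

(* During the first [t] rounds forecaster [j] predicts the word [v] with confidence [q]
   and the other forecaster predicts [1/2]; afterwards both play as [f0, f1] on the
   history rebuilt from the realized outcomes.  The plays then eventually coincide with
   those of [f0, f1], and on subsets of the cylinder [v^t] the measure [P_j] is
   multiplied by [q ^ t / cylmass f0 f1 j v t]. *)
Section Hat.
Variables (f0 f1 : Strategy) (j : bool) (v : Seq) (t : nat) (q : R).

Definition hat_dist (i : bool) (k : nat) : Dist :=
  if Bool.eqb i j then mkdist (if v k then q else 1 - q) else mkdist (/2).

Definition hat (i : bool) : Strategy := fun h =>
  if (length h <? t)%nat then hat_dist i (length h)
  else strat i f0 f1 (hist f0 f1 (hist_outcomes h) (length h)).

Lemma strat_hat i w n : strat i (hat false) (hat true) (hist (hat false) (hat true) w n) =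
  if (n <? t)%nat then hat_dist i n else strat i f0 f1 (hist f0 f1 w n).
Proof.
  replace (strat i (hat false) (hat true)) with (hat i) by (destruct i; reflexivity).
  unfold hat. rewrite hist_length.
  destruct (n <? t)%nat; auto. f_equal. apply hist_ext. intros k Hk.
  unfold hist_outcomes. rewrite map_outcome_hist. apply word_seq_prefix_word; auto.
Qed.

Lemma fprob_hat i w n : fprob (hat false) (hat true) i w n =
  if (n <? t)%nat then dprob (hat_dist i n) (w n) else fprob f0 f1 i w n.
Proof. unfold fprob. rewrite strat_hat. destruct (n <? t)%nat; auto. Qed.

Lemma path_hat w n : (t <= n)%nat -> path (hat false) (hat true) w n = path f0 f1 w n.
Proof.
  intros H. unfold path.
  pose proof (strat_hat false w n) as E0. pose proof (strat_hat true w n) as E1.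
  simpl in E0, E1. rewrite (proj2 (Nat.ltb_ge n t) H) in E0, E1. rewrite E0, E1. reflexivity.
Qed.

Hypothesis Hq : 0 < q < 1.

Lemma hat_dist_pos i k b : (Bool.eqb i j = true -> b = v k) -> dprob (hat_dist i k) b > 0.
Proof.
  intros H. unfold hat_dist. destruct (Bool.eqb i j).
  - rewrite (H eq_refl). destruct (v k); simpl; rewrite clamp_id; lra.
  - destruct b; simpl; rewrite clamp_id; lra.
Qed.

Lemma hat_dist_j k : dprob (hat_dist j k) (v k) = q.
Proof.
  unfold hat_dist. rewrite Bool.eqb_reflx. destruct (v k); simpl; rewrite clamp_id; lra.
Qed.

Lemma cylmass_hat_short u s : (s <= t)%nat -> (forall k, (k < s)%nat -> u k = v k) ->
  cylmass (hat false) (hat true) j u s = q ^ s.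
Proof.
  induction s; intros Hs Hu; simpl; auto.
  rewrite IHs, fprob_hat, (proj2 (Nat.ltb_lt s t)), Hu, hat_dist_j by (auto; lia). ring.
Qed.

Lemma cylmass_hat_long u s : (t <= s)%nat -> (forall k, (k < t)%nat -> u k = v k) ->
  cylmass f0 f1 j u s * q ^ t = cylmass f0 f1 j v t * cylmass (hat false) (hat true) j u s.
Proof.
  intros Hs Hu. induction Hs.
  - rewrite cylmass_hat_short, (cylmass_ext f0 f1 j u v) by auto. ring.
  - simpl. rewrite fprob_hat, (proj2 (Nat.ltb_ge m t)) by lia.
    rewrite <- Rmult_assoc, <- IHHs. ring.
Qed.

Lemma Pm_le_hat (B : Seq -> Prop) : (forall w, B w -> cyl v t w) -> cylmass f0 f1 j v t > 0 ->
  Pm f0 f1 j B <= (cylmass f0 f1 j v t / q ^ t) * Pm (hat false) (hat true) j B.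
Proof.
  intros HB Hc. assert (Hqt : q ^ t > 0) by (apply pow_lt; lra).
  apply Pm_le_scaled. { apply Rlt_le, Rdiv_lt_0_compat; lra. }
  intros u s [w [Bw Cw]]. pose proof (HB w Bw) as Cv.
  assert (Hu : forall k, (k < s)%nat -> (k < t)%nat -> u k = v k).
  { intros k H1 H2. rewrite <- (Cw k H1). apply Cv; auto. }
  destruct (Nat.le_gt_cases t s) as [Hts|Hts].
  - exists u, s; split; auto.
    pose proof (cylmass_hat_long u s Hts (fun k Hk => Hu k ltac:(lia) Hk)).
    apply Req_le. field_simplify_eq; [|lra]. lra.
  - exists v, t; split; [intros; apply HB; auto|].
    rewrite cylmass_hat_short by (try lia; intros; apply Hu; lia).
    assert (Hle : q ^ t <= q ^ s).
    { replace t with (s + (t - s))%nat by lia. rewrite pow_add.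
      pose proof (pow_le_one q (t - s) ltac:(lra)). pose proof (pow_lt q s ltac:(lra)). nra. }
    unfold Rdiv. rewrite Rmult_assoc. rewrite <- (Rmult_1_r (cylmass f0 f1 j v t)) at 1.
    apply Rmult_le_compat_l; [lra|]. apply Rmult_le_reg_l with (q ^ t); [lra|].
    rewrite <- Rmult_assoc, Rinv_r by lra. lra.
Qed.
End Hat.

Lemma tail_test_hat (T : Test) f0 f1 j v t q w : tail_test T -> 0 < q < 1 -> (t > 0)%nat ->
  cyl v t w -> (forall i k, (k < t)%nat -> fprob f0 f1 i w k > 0) ->
  T w (hat f0 f1 j v t q false) (hat f0 f1 j v t q true) = T w f0 f1.
Proof.
  intros Htail Hq Ht Cw Hpos. apply Htail. exists (S t). split; [lia|split].
  - intros k Hk. apply path_hat. lia.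
  - intros k i Hk. split; [|apply Hpos; lia].
    rewrite fprob_hat, (proj2 (Nat.ltb_lt k t)) by lia.
    apply hat_dist_pos; auto. intros _. apply Cw; lia.
Qed.

Lemma exists_pair_rejecting (T : Test) f0 f1 j (X : Seq -> Prop) eps :
  tail_test T -> 0 < eps < 1 ->
  (forall w, X w -> T w f0 f1 = vof (negb j)) ->
  (forall w, X w -> fpos f0 f1 (negb j) w) ->
  Pm f0 f1 j X > 0 ->
  exists g0 g1, Pm g0 g1 j (fun w => T w g0 g1 = vof (negb j)) > 1 - eps.
Proof.
  intros Htail Heps HT Hpos HX. set (th := 1 - eps / 2).
  destruct (exists_dense_cylinder f0 f1 j X th HX ltac:(unfold th; lra)) as [v [t Hd]].
  set (B := fun w => X w /\ cyl v t w) in *. set (c := cylmass f0 f1 j v t) in *.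
  assert (Hc : c > 0).
  { pose proof (Pm_le_cylmass f0 f1 j B v t (fun w Hw => proj2 Hw)) as Hle. fold c in Hle.
    unfold th in *. nra. }
  destruct (Nat.eq_dec t 0) as [->|Ht].
  { exists f0, f1. eapply Rlt_le_trans; [|apply (Pm_mono _ _ _ B); intros w [Xw _]; auto].
    unfold c in Hd; simpl in Hd. unfold th in Hd; lra. }
  set (rho := (1 - eps) / th).
  assert (Hrho : 0 < rho < 1).
  { unfold rho, th; split; [apply Rdiv_lt_0_compat; lra|].
    apply Rmult_lt_reg_r with (1 - eps / 2); [lra|]. field_simplify; lra. }
  destruct (exists_pow_ge rho t Hrho) as [q [Hq Hqt]].
  set (g0 := hat f0 f1 j v t q false). set (g1 := hat f0 f1 j v t q true).
  exists g0, g1.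
  assert (HBT : forall w, B w -> T w g0 g1 = vof (negb j)).
  { intros w [Xw Cw]. rewrite <- (HT w Xw). apply tail_test_hat; auto; [lia|].
    intros i k Hk. destruct (Bool.bool_dec i j) as [->|Hij].
    - apply (fprob_pos_of_cylmass f0 f1 j w t); auto.
      rewrite (cylmass_ext f0 f1 j w v) by (intros; apply Cw; auto). exact Hc.
    - replace i with (negb j) by (destruct i, j; simpl; congruence). apply Hpos, Xw. }
  pose proof (Pm_le_hat f0 f1 j v t q Hq B (fun w Hw => proj2 Hw) Hc) as Hhat.
  pose proof (Pm_mono g0 g1 j B _ HBT) as Hmono. fold g0 g1 c in Hhat.
  assert (Hqpos : q ^ t > 0) by (apply pow_lt; lra).
  assert (th * q ^ t < Pm g0 g1 j B).
  { apply Rmult_lt_reg_l with (c / q ^ t); [apply Rdiv_lt_0_compat; lra|].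
    replace (c / q ^ t * (th * q ^ t)) with (th * c) by (field; lra). lra. }
  assert (th * rho <= th * q ^ t) by (apply Rmult_le_compat_l; unfold th; lra).
  replace (th * rho) with (1 - eps) in * by (unfold rho; field; unfold th; lra).
  lra.
Qed.

(** * Where [T] and the derivative test disagree *)

Lemma Pm_Dzero_disagree_null (T : Test) f0 f1 i : test_measurable T -> reasonable T ->
  Pm f0 f1 i (fun w => Dzero f0 f1 i w /\ T w f0 f1 <> vof i) = 0.
Proof.
  intros Hmeas Hreas. set (Z := fun w => Dzero f0 f1 i w /\ T w f0 f1 <> vof i).
  apply Rle_antisym; [|apply Pm_nonneg]. apply Rnot_lt_le; intros Hlt.
  assert (Pm f0 f1 (negb i) Z = 0).
  { apply Rle_antisym; [|apply Pm_nonneg]. rewrite <- (Pm_Dzero_null f0 f1 i).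
    apply Pm_mono. intros w [H _]; auto. }
  enough (Pm f0 f1 i (fun w => Z w /\ T w f0 f1 = vof i) = 0).
  { pose proof (Hreas f0 f1 i Z ltac:(apply measurable_and, meas_compl, Hmeas;
      apply measurable_Dzero) Hlt H). lra. }
  apply Pm_empty. intros w [[_ H1] H2]; auto.
Qed.

Lemma disagreement_cases (T : Test) f0 f1 i w : T w f0 f1 <> Dtest w f0 f1 ->
  ~ fpos f0 f1 i w \/ (Dzero f0 f1 i w /\ T w f0 f1 <> vof i) \/ Dzero f0 f1 (negb i) w \/
  (T w f0 f1 = vof (negb i) /\ fpos f0 f1 (negb i) w) \/
  (T w f0 f1 = vof i /\ fpos f0 f1 i w /\ fpos f0 f1 (negb i) w /\ ~ Un_cv (Dt f0 f1 i w) 0).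
Proof.
  intros Hw. destruct (classic (fpos f0 f1 i w)) as [Pw|Pw]; [|tauto].
  destruct (classic (Dzero f0 f1 i w)) as [Zw|Zw].
  { rewrite (Dtest_Dzero f0 f1 i w Zw) in Hw. tauto. }
  destruct (classic (Dzero f0 f1 (negb i) w)) as [Ww|Ww]; [tauto|].
  assert (Hhalf : Dtest w f0 f1 = Vhalf) by (apply Dtest_half; destruct i; auto).
  assert (Nc : ~ Un_cv (Dt f0 f1 i w) 0) by (intros C; apply Zw; split; auto).
  assert (Pn : fpos f0 f1 (negb i) w)
    by (apply NNPP; intros Pn; apply Nc, Dt_cv0_of_not_fpos, Pn).
  rewrite Hhalf in Hw. right; right; right.
  destruct (T w f0 f1), i; simpl; tauto.
Qed.

Lemma exists_rejected_set (T : Test) f0 f1 i : test_measurable T -> reasonable T ->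
  Pm f0 f1 i (fun w => T w f0 f1 <> Dtest w f0 f1) > 0 ->
  exists j (X : Seq -> Prop), (forall w, X w -> T w f0 f1 = vof (negb j)) /\
    (forall w, X w -> fpos f0 f1 (negb j) w) /\ Pm f0 f1 j X > 0.
Proof.
  intros Hmeas Hreas Hi.
  set (A := fun w => ~ fpos f0 f1 i w).
  set (Z := fun w => Dzero f0 f1 i w /\ T w f0 f1 <> vof i).
  set (W := Dzero f0 f1 (negb i)).
  set (N := fun w => T w f0 f1 = vof (negb i) /\ fpos f0 f1 (negb i) w).
  set (E := fun w => T w f0 f1 = vof i /\ fpos f0 f1 i w /\ fpos f0 f1 (negb i) w /\
                     ~ Un_cv (Dt f0 f1 i w) 0).
  assert (HA : Pm f0 f1 i A = 0) by apply Pm_not_fpos_null.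
  assert (HZ : Pm f0 f1 i Z = 0) by (apply Pm_Dzero_disagree_null; auto).
  assert (HW : Pm f0 f1 i W = 0)
    by (unfold W; rewrite <- (Bool.negb_involutive i) at 1; apply Pm_Dzero_null).
  assert (Hsum : 0 < Pm f0 f1 i N + Pm f0 f1 i E).
  { pose proof (Pm_mono f0 f1 i _ (fun w => A w \/ Z w \/ W w \/ N w \/ E w)
      (disagreement_cases T f0 f1 i)).
    pose proof (Pm_subadditive f0 f1 i A (fun w => Z w \/ W w \/ N w \/ E w)).
    pose proof (Pm_subadditive f0 f1 i Z (fun w => W w \/ N w \/ E w)).
    pose proof (Pm_subadditive f0 f1 i W (fun w => N w \/ E w)).
    pose proof (Pm_subadditive f0 f1 i N E). cbv beta in *. lra. }
  destruct (Rlt_or_le 0 (Pm f0 f1 i N)) as [HN|HN].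
  - exists i, N. repeat split; auto; intros w [? ?]; auto.
  - exists (negb i), E. rewrite Bool.negb_involutive. repeat split.
    + intros w [? _]; auto.
    + intros w [_ [? _]]; auto.
    + destruct (Rle_lt_or_eq_dec 0 _ (Pm_nonneg f0 f1 (negb i) E)) as [H|H]; auto.
      exfalso. enough (Pm f0 f1 i E = 0) by lra.
      apply Pm_null_of_ratio_not_cv0; auto. intros w [_ [? [_ ?]]]; auto.
Qed.

Theorem theorem3 (T : Test) :
  test_measurable T -> anonymous T -> non_counterfactual T ->
  reasonable T -> tail_test T ->
  ~ test_equiv T Dtest ->
  forall eps : R, 0 < eps < 1 ->
  exists f0 f1 : Strategy,
    Pm f0 f1 false (fun w => T w f0 f1 = V1) > 1 - eps \/
    Pm f0 f1 true (fun w => T w f0 f1 = V0) > 1 - eps.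
Proof.
  intros Hmeas _ _ Hreas Htail Hne eps Heps.
  assert (exists f0 f1 i, Pm f0 f1 i (fun w => T w f0 f1 <> Dtest w f0 f1) > 0)
    as [f0 [f1 [i Hi]]].
  { apply NNPP; intros N. apply Hne. intros f0 f1 i.
    apply Rle_antisym; [|apply Pm_nonneg]. apply Rnot_lt_le; intros Hl; apply N; eauto. }
  destruct (exists_rejected_set T f0 f1 i Hmeas Hreas Hi) as [j [X [HT [Hpos HX]]]].
  destruct (exists_pair_rejecting T f0 f1 j X eps Htail Heps HT Hpos HX) as [g0 [g1 Hg]].
  exists g0, g1. destruct j; auto.
Qed.
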